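(* Let $C\in\mathbb{R}^{N\times N}$ be symmetric positive definite, let $\{1,\dots,N\}=\mathcal S\cup\mathcal S'$ be a partition into disjoint nonempty sets, and let $\Gamma\subset\mathbb{C}$ be a positively oriented simple closed contour with $\Gamma\subset\mathbb{C}\setminus(-\infty,0]$ whose interior contains the spectrum of $C$, and such that $\Gamma$ does not meet the spectra of $C$, $C_{\mathcal S}$, $C_{\mathcal S'}$. For $z\in\Gamma$ set $B(z):=zI-C_{\mathcal S}$, $D(z):=zI-C_{\mathcal S'}$, $H(z):=C_{\mathcal S\mathcal S'}D(z)^{-1}C_{\mathcal S'\mathcal S}$, \[ R_{\mathcal S}(z):=(zI-C_{\mathcal S})^{-1}-\big[(zI-C)^{-1}\big]_{\mathcal S},\qquad \Theta_\Gamma:=\sup_{z\in\Gamma}\|B(z)^{-1}H(z)\|. \] If $\Theta_\Gamma<1$, then for all $z\in\Gamma$, \[ \|R_{\mathcal S}(z)\|\le\frac{\|C_{\mathcal S\mathcal S'}\|^2}{1-\Theta_\Gamma}\,\|B(z)^{-1}\|^2\,\|D(z)^{-1}\|. \]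
   Context: $\|\cdot\|$ is the spectral norm (on complex matrices). $C_{\mathcal S}$, $C_{\mathcal S'}$ are principal submatrices of $C$ on $\mathcal S,\mathcal S'$; $C_{\mathcal S\mathcal S'}$ (resp. $C_{\mathcal S'\mathcal S}$) is the off-diagonal block with rows in $\mathcal S$ and columns in $\mathcal S'$ (resp. vice versa); $[M]_{\mathcal S}$ is the principal submatrix of $M$ on $\mathcal S$. *)

From HB Require Import structures.
From mathcomp Require Import all_boot all_order all_algebra.
From mathcomp Require Import all_classical all_reals all_analysis.
From mathcomp.real_closed Require Import complex.
Set Implicit Arguments. Unset Strict Implicit. Unset Printing Implicit Defensive.
Import Order.TTheory GRing.Theory Num.Theory.
Import numFieldNormedType.Exports.
Local Open Scope classical_set_scope.
Local Open Scope ring_scope.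

Section Defs.
Variable R : realType.

Definition cabs (z : R[i]) : R := Num.sqrt (complex.Re z ^+ 2 + complex.Im z ^+ 2).

Definition cvnorm n (x : 'cV[R[i]]_n) : R :=
  Num.sqrt (\sum_(k < n) cabs (x k 0) ^+ 2).

Definition specnorm m n (A : 'M[R[i]]_(m, n)) : R :=
  sup [set cvnorm (A *m x) | x in [set x : 'cV[R[i]]_n | cvnorm x = 1]].

Definition cmx m n (M : 'M[R]_(m, n)) : 'M[R[i]]_(m, n) :=
  map_mx (real_complex R) M.

(* block of M with rows in S and columns in T (indices in increasing order) *)
Definition blk N (S T : {set 'I_N}) (M : 'M[R]_N) : 'M[R]_(#|S|, #|T|) :=
  \matrix_(i < #|S|, j < #|T|) M (enum_val i) (enum_val j).

Definition curve (gx gy : R -> R) (t : R) : R[i] := Complex (gx t) (gy t).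

Definition curve_set (gx gy : R -> R) : set R[i] :=
  [set curve gx gy t | t in `[0, 1]%classic].

Definition simple_closed_curve (gx gy : R -> R) : Prop :=
  [/\ {within `[0, 1], continuous gx},
      {within `[0, 1], continuous gy},
      curve gx gy 0 = curve gx gy 1 &
      forall s t, 0 <= s < 1 -> 0 <= t < 1 ->
        curve gx gy s = curve gx gy t -> s = t].

(* the winding number of the curve around a (not on the curve) equals 1:
   a continuous argument of (curve t - a) increases by exactly 2 pi *)
Definition winding_one (gx gy : R -> R) (a : R[i]) : Prop :=
  exists theta : R -> R,
    [/\ {within `[0, 1], continuous theta},
        (forall t, 0 <= t <= 1 ->
           curve gx gy t - a =
           real_complex R (cabs (curve gx gy t - a)) * Complex (cos (theta t)) (sin (theta t))) &
        theta 1 - theta 0 = 2 * pi].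

End Defs.

(* Block the resolvent G := (zI - C)^-1 along S, S'. The S x S and S' x S blocks of
   (zI - C) G = I give the Schur-complement identity (B - H) G_S = I, i.e.
   G_S = B^-1 + X G_S with X := B^-1 H, so R_S = B^-1 - G_S solves the fixed-point
   equation R_S = X R_S - X B^-1. As |X| <= Theta < 1 this yields
   |R_S| <= |X B^-1| / (1 - Theta) <= |B^-1|^2 |C_SS'| |D^-1| |C_S'S| / (1 - Theta),
   and |C_S'S| = |C_SS'^T| <= |C_SS'| because C is real symmetric. *)

From mathcomp Require Import all_boot all_order all_algebra.
From mathcomp Require Import all_classical all_reals all_analysis.
From mathcomp.real_closed Require Import complex.
From mathcomp Require Import ring.
Import Order.TTheory GRing.Theory Num.Theory.
Local Open Scope ring_scope.
Set Implicit Arguments. Unset Strict Implicit.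

Section ComplexModulus.
Variable R : realType.
Implicit Types (x y z : R[i]) (r : R).

Lemma normc_cabs z : `|z| = real_complex R (cabs z).
Proof. by rewrite normc_def. Qed.

Lemma cabs_ge0 z : 0 <= cabs z.
Proof. exact: sqrtr_ge0. Qed.

Lemma cabsD x y : cabs (x + y) <= cabs x + cabs y.
Proof. by rewrite -lecR rmorphD /= -!normc_cabs ler_normD. Qed.

Lemma cabsM x y : cabs (x * y) = cabs x * cabs y.
Proof. by apply: complexI; rewrite rmorphM /= -!normc_cabs normrM. Qed.

Lemma cabsN x : cabs (- x) = cabs x.
Proof. by apply: complexI; rewrite -!normc_cabs normrN. Qed.

Lemma cabs_real r : cabs (real_complex R r) = `|r|.
Proof. by rewrite /cabs /= expr0n /= addr0 sqrtr_sqr. Qed.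

Lemma cabs_conj z : cabs (conjc z) = cabs z.
Proof. by case: z => a b; rewrite /cabs /= sqrrN. Qed.

Lemma cabs_sum n (F : 'I_n -> R[i]) : cabs (\sum_i F i) <= \sum_i cabs (F i).
Proof.
rewrite -lecR rmorph_sum /= -normc_cabs (le_trans (ler_norm_sum _ _ _)) //.
by rewrite le_eqVlt (eq_bigr _ (fun i _ => normc_cabs (F i))) eqxx.
Qed.

Lemma mulc_conj z : z * conjc z = real_complex R (cabs z ^+ 2).
Proof.
case: z => a b; rewrite /cabs /= sqr_sqrtr ?addr_ge0 ?sqr_ge0 //.
by congr Complex; rewrite /=; ring.
Qed.

End ComplexModulus.

Lemma lagrange_identity (R : comPzRingType) n (a b : 'I_n -> R) :
  \sum_i \sum_j (a i * b j - a j * b i) ^+ 2 =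
  2 * ((\sum_i a i ^+ 2) * (\sum_j b j ^+ 2) - (\sum_i a i * b i) ^+ 2).
Proof.
have sum_prod (u v : 'I_n -> R) :
    (\sum_i u i) * (\sum_j v j) = \sum_i \sum_j u i * v j.
  by rewrite mulr_suml; under eq_bigr do rewrite mulr_sumr.
have swap : \sum_i \sum_j a j ^+ 2 * b i ^+ 2 = \sum_i \sum_j a i ^+ 2 * b j ^+ 2.
  by rewrite exchange_big.
have sqr_expand i j : (a i * b j - a j * b i) ^+ 2 =
    a i ^+ 2 * b j ^+ 2 - a i * b i * (a j * b j) - a i * b i * (a j * b j)
    + a j ^+ 2 * b i ^+ 2.
  by ring.
under eq_bigr do under eq_bigr do rewrite sqr_expand.
under eq_bigr do rewrite !big_split sumrN /=.
rewrite !big_split !sumrN /= swap expr2 !sum_prod.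
(* [ring] does not recognise the ring structure on the sums produced by [big_split]. *)
have double (x y : R) : x - y - y + x = 2 * (x - y) by ring.
exact: double.
Qed.

Lemma cauchy_schwarz (R : realDomainType) n (a b : 'I_n -> R) :
  (\sum_i a i * b i) ^+ 2 <= (\sum_i a i ^+ 2) * (\sum_i b i ^+ 2).
Proof.
have := lagrange_identity a b.
have /[swap] -> : 0 <= \sum_i \sum_j (a i * b j - a j * b i) ^+ 2.
  by apply: sumr_ge0 => i _; apply: sumr_ge0 => j _; exact: sqr_ge0.
by rewrite pmulr_rge0 // subr_ge0.
Qed.

Section EuclideanNorm.
Variable R : realType.
Variable n : nat.
Implicit Types x y : 'cV[R[i]]_n.

Definition cvdot x y : R[i] := \sum_k x k 0 * conjc (y k 0).

Lemma cvnorm_ge0 x : 0 <= cvnorm x.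
Proof. exact: sqrtr_ge0. Qed.

Lemma cvnorm_sqr x : cvnorm x ^+ 2 = \sum_k cabs (x k 0) ^+ 2.
Proof. by rewrite sqr_sqrtr // sumr_ge0 // => k _; exact: sqr_ge0. Qed.

Lemma cvnorm_entry x k : cabs (x k 0) <= cvnorm x.
Proof.
rewrite -ler_sqr ?nnegrE ?cabs_ge0 ?cvnorm_ge0 // cvnorm_sqr (bigD1 k) //=.
by rewrite lerDl sumr_ge0 // => i _; exact: sqr_ge0.
Qed.

Lemma sum_cabs_mul_le x y :
  \sum_k cabs (x k 0) * cabs (y k 0) <= cvnorm x * cvnorm y.
Proof.
have sum_ge0 : 0 <= \sum_k cabs (x k 0) * cabs (y k 0).
  by apply: sumr_ge0 => k _; rewrite mulr_ge0 ?cabs_ge0.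
rewrite -ler_sqr ?nnegrE ?mulr_ge0 ?cvnorm_ge0 // exprMn !cvnorm_sqr.
exact: cauchy_schwarz.
Qed.

Lemma cvdot_self x : cvdot x x = real_complex R (cvnorm x ^+ 2).
Proof.
by rewrite cvnorm_sqr rmorph_sum; apply: eq_bigr => k _; rewrite mulc_conj.
Qed.

Lemma cabs_cvdot_le x y : cabs (cvdot x y) <= cvnorm x * cvnorm y.
Proof.
apply: le_trans (cabs_sum _) _; apply: le_trans (sum_cabs_mul_le x y).
by under eq_bigr do rewrite cabsM cabs_conj.
Qed.

Lemma cvnormD x y : cvnorm (x + y) <= cvnorm x + cvnorm y.
Proof.
rewrite -ler_sqr ?nnegrE ?addr_ge0 ?cvnorm_ge0 // sqrrD !cvnorm_sqr.
apply: le_trans (_ : \sum_k (cabs (x k 0) + cabs (y k 0)) ^+ 2 <= _).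
  apply: ler_sum => k _; rewrite mxE ler_sqr ?nnegrE ?addr_ge0 ?cabs_ge0 //.
  exact: cabsD.
under eq_bigr do rewrite sqrrD.
rewrite !big_split /= lerD2r lerD2l mulr2n.
by apply: lerD; exact: sum_cabs_mul_le.
Qed.

Lemma cvnormZ c x : cvnorm (c *: x) = cabs c * cvnorm x.
Proof.
apply: (@pexpIrn _ 2); rewrite ?nnegrE ?mulr_ge0 ?cabs_ge0 ?cvnorm_ge0 //.
rewrite exprMn !cvnorm_sqr mulr_sumr; apply: eq_bigr => k _.
by rewrite mxE cabsM exprMn.
Qed.

Lemma cvnormN x : cvnorm (- x) = cvnorm x.
Proof. by rewrite -scaleN1r cvnormZ cabsN cabs_real normr1 mul1r. Qed.

End EuclideanNorm.

Lemma cvdot_trmx_real (R : realType) m n (A : 'M[R]_(m, n)) x y :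
  cvdot ((cmx A)^T *m x) y = cvdot x (cmx A *m y).
Proof.
rewrite /cvdot; under eq_bigr do rewrite !mxE mulr_suml.
under [RHS]eq_bigr do rewrite !mxE rmorph_sum mulr_sumr.
rewrite exchange_big; apply: eq_bigr => k _; apply: eq_bigr => j _.
by rewrite !mxE rmorphM /= oppr0 mulrA [x k 0 * _]mulrC.
Qed.

Lemma cvnorm_mulmx_bounded (R : realType) m n (A : 'M[R[i]]_(m, n)) :
  exists k, forall x, cvnorm (A *m x) <= k * cvnorm x.
Proof.
have row_ge0 i : 0 <= \sum_j cabs (A i j).
  by apply: sumr_ge0 => j _; exact: cabs_ge0.
have rows_ge0 : 0 <= \sum_i (\sum_j cabs (A i j)) ^+ 2.
  by apply: sumr_ge0 => i _; exact: sqr_ge0.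
exists (Num.sqrt (\sum_i (\sum_j cabs (A i j)) ^+ 2)) => x.
rewrite -ler_sqr ?nnegrE ?mulr_ge0 ?cvnorm_ge0 ?sqrtr_ge0 //.
rewrite cvnorm_sqr exprMn sqr_sqrtr // mulr_suml; apply: ler_sum => i _.
rewrite -exprMn ler_sqr ?nnegrE ?mulr_ge0 ?cabs_ge0 ?cvnorm_ge0 //.
rewrite mxE mulr_suml; apply: le_trans (cabs_sum _) _; apply: ler_sum => j _.
by rewrite cabsM ler_wpM2l ?cabs_ge0 ?cvnorm_entry.
Qed.

Section SpectralNorm.
Variable R : realType.
Variables m n : nat.
Implicit Types A B : 'M[R[i]]_(m, n).

Lemma specnorm_mulmx_le A x : cvnorm (A *m x) <= specnorm A * cvnorm x.
Proof.
have [k bound_k] := cvnorm_mulmx_bounded A.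
have [x0|x_neq0] := eqVneq (cvnorm x) 0.
  by apply: le_trans (bound_k x) _; rewrite x0 !mulr0.
have x_gt0 : 0 < cvnorm x by rewrite lt_def x_neq0 cvnorm_ge0.
pose u := real_complex R (cvnorm x)^-1 *: x.
have u1 : cvnorm u = 1.
  by rewrite cvnormZ cabs_real ger0_norm ?invr_ge0 ?cvnorm_ge0 // mulVf.
have : cvnorm (A *m u) <= specnorm A.
  apply: ub_le_sup; last by exists u.
  by exists k => _ [v /= v1 <-]; rewrite -[k]mulr1 -v1 bound_k.
rewrite -scalemxAr cvnormZ cabs_real ger0_norm ?invr_ge0 ?cvnorm_ge0 //.
by rewrite mulrC ler_pdivrMr.
Qed.

Lemma specnorm_ge0 A : 0 <= specnorm A.
Proof.
rewrite /specnorm; set E := [set _ | _ in _]%classic.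
have [->|/set0P [_ [v /= v1 _]]] := eqVneq E set0%classic; first by rewrite sup0.
apply: le_trans (cvnorm_ge0 (A *m v)) _.
by rewrite -[leRHS]mulr1 -v1 specnorm_mulmx_le.
Qed.

Lemma specnorm_le A k :
  0 <= k -> (forall x, cvnorm (A *m x) <= k * cvnorm x) -> specnorm A <= k.
Proof.
move=> k_ge0 bound_k; rewrite /specnorm; set E := [set _ | _ in _]%classic.
have [->|/set0P E_neq0] := eqVneq E set0%classic; first by rewrite sup0.
by apply: ge_sup => // _ [v /= v1 <-]; rewrite -[k]mulr1 -v1 bound_k.
Qed.

Lemma specnormD A B : specnorm (A + B) <= specnorm A + specnorm B.
Proof.
apply: specnorm_le => [|x]; first by rewrite addr_ge0 ?specnorm_ge0.
rewrite mulmxDl mulrDl; apply: le_trans (cvnormD _ _) _.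
by rewrite lerD ?specnorm_mulmx_le.
Qed.

Lemma specnormN A : specnorm (- A) = specnorm A.
Proof.
have le_oppr B : specnorm (- B) <= specnorm B.
  apply: specnorm_le => [|x]; first exact: specnorm_ge0.
  by rewrite mulNmx cvnormN specnorm_mulmx_le.
have := le_oppr (- A); rewrite opprK => ge_oppr.
by apply/le_anti/andP; split; [exact: le_oppr | exact: ge_oppr].
Qed.

End SpectralNorm.

Lemma specnormM (R : realType) m n p (A : 'M[R[i]]_(m, n)) (B : 'M[R[i]]_(n, p)) :
  specnorm (A *m B) <= specnorm A * specnorm B.
Proof.
apply: specnorm_le => [|x]; first by rewrite mulr_ge0 ?specnorm_ge0.
rewrite -mulmxA -mulrA; apply: le_trans (specnorm_mulmx_le _ _) _.
by rewrite ler_wpM2l ?specnorm_ge0 ?specnorm_mulmx_le.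
Qed.

(* With [w := A^T x]: [|w|^2 = <A^T x, w> = <x, A w> <= |x| |A| |w|]. *)
Lemma specnorm_trmx_real (R : realType) m n (A : 'M[R]_(m, n)) :
  specnorm (cmx A)^T <= specnorm (cmx A).
Proof.
apply: specnorm_le => [|x]; first exact: specnorm_ge0.
set w := (cmx A)^T *m x.
have [w0|w_neq0] := eqVneq (cvnorm w) 0.
  by rewrite w0 mulr_ge0 ?specnorm_ge0 ?cvnorm_ge0.
have w_gt0 : 0 < cvnorm w by rewrite lt_def w_neq0 cvnorm_ge0.
have -> : cvnorm w = cabs (cvdot w w) / cvnorm w.
  by rewrite cvdot_self cabs_real ger0_norm ?sqr_ge0 // expr2 mulfK.
rewrite ler_pdivrMr // {1}/w cvdot_trmx_real; apply: le_trans (cabs_cvdot_le _ _) _.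
by rewrite [leRHS]mulrAC [leRHS]mulrC ler_wpM2l ?cvnorm_ge0 ?specnorm_mulmx_le.
Qed.

Lemma specnorm_fixpoint_le (R : realType) n p (X : 'M[R[i]]_n)
    (Y K : 'M[R[i]]_(n, p)) t :
  Y = X *m Y + K -> specnorm X <= t -> t < 1 -> specnorm Y <= specnorm K / (1 - t).
Proof.
move=> eqY Xt t_lt1; rewrite ler_pdivlMr ?subr_gt0 //.
have fix_le : specnorm Y <= specnorm X * specnorm Y + specnorm K.
  by rewrite {1}eqY; apply: le_trans (specnormD _ _) _; rewrite lerD2r specnormM.
apply: le_trans (_ : specnorm Y - specnorm X * specnorm Y <= _).
  by rewrite mulrBr mulr1 lerD2l lerN2 mulrC ler_wpM2l ?specnorm_ge0.
by rewrite lerBlDl.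
Qed.

(* [blk I J M] and the block of the resolvent in [RS] are [mxblk I J _] up to conversion. *)
Definition mxblk (T : Type) N (I J : {set 'I_N}) (M : 'M[T]_N) : 'M[T]_(#|I|, #|J|) :=
  \matrix_(i < #|I|, j < #|J|) M (enum_val i) (enum_val j).

Section SetBlocks.
Variables (R : pzRingType) (N : nat).
Implicit Types (I J : {set 'I_N}) (M : 'M[R]_N).

Lemma mxblkB I J M M' : mxblk I J (M - M') = mxblk I J M - mxblk I J M'.
Proof. by apply/matrixP => i j; rewrite !mxE. Qed.

Lemma mxblk_scalar I (a : R) : mxblk I I a%:M = a%:M.
Proof. by apply/matrixP => i j; rewrite !mxE (inj_eq enum_val_inj). Qed.

Lemma mxblk_scalar_disjoint I J (a : R) : [disjoint I & J] -> mxblk I J a%:M = 0.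
Proof.
move=> dIJ; apply/matrixP => i j; rewrite !mxE.
case: eqP => [eij|]; last by rewrite mulr0n.
by have := enum_valP j; rewrite -eij (disjointFr dIJ (enum_valP i)).
Qed.

Lemma mxblk_sub_scalar I (a : R) M : mxblk I I (a%:M - M) = a%:M - mxblk I I M.
Proof. by rewrite mxblkB mxblk_scalar. Qed.

Lemma mxblk_sub_scalar_disjoint I J (a : R) M :
  [disjoint I & J] -> mxblk I J (a%:M - M) = - mxblk I J M.
Proof. by move=> dIJ; rewrite mxblkB mxblk_scalar_disjoint // sub0r. Qed.

Variables S S' : {set 'I_N}.
Hypotheses (dS : [disjoint S & S']) (covS : S :|: S' = [set: 'I_N]).

Lemma mxblk_mul I J M M' :
  mxblk I J (M *m M') = mxblk I S M *m mxblk S J M' + mxblk I S' M *m mxblk S' J M'.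
Proof.
have inS' k : (k \notin S) = (k \in S').
  have : k \in S :|: S' by rewrite covS finset.in_setT.
  by rewrite finset.in_setU; case: (boolP (k \in S)) => [/(disjointFr dS)->|].
apply/matrixP => i j; rewrite !mxE (bigID (fun k => k \in S)) /=; congr (_ + _).
  by rewrite (big_enum_val (A := fun k => k \in S)); apply: eq_bigr => k _; rewrite !mxE.
rewrite (eq_bigl (fun k => k \in S')) => [|k]; last exact: inS'.
by rewrite (big_enum_val (A := fun k => k \in S')); apply: eq_bigr => k _; rewrite !mxE.
Qed.

End SetBlocks.

Section SchurComplement.
Variables (R : comUnitRingType) (N : nat) (S S' : {set 'I_N}).
Hypotheses (dS : [disjoint S & S']) (covS : S :|: S' = [set: 'I_N]).

Lemma schur_complement_mxblk (M G : 'M[R]_N) :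
  M *m G = 1%:M -> mxblk S' S' M \in unitmx ->
  (mxblk S S M - mxblk S S' M *m invmx (mxblk S' S' M) *m mxblk S' S M)
    *m mxblk S S G = 1%:M.
Proof.
move=> MG unitD; set D := mxblk S' S' M.
have rowS : mxblk S S M *m mxblk S S G + mxblk S S' M *m mxblk S' S G = 1%:M.
  by rewrite -(mxblk_mul dS covS) MG mxblk_scalar.
have rowS' : mxblk S' S M *m mxblk S S G + D *m mxblk S' S G = 0.
  by rewrite -(mxblk_mul dS covS) MG mxblk_scalar_disjoint // disjoint_sym.
have DQ : D *m mxblk S' S G = - (mxblk S' S M *m mxblk S S G).
  by apply/eqP; rewrite -subr_eq0 opprK addrC rowS'.
have eQ : mxblk S' S G = - (invmx D *m mxblk S' S M *m mxblk S S G).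
  by rewrite -mulmxA -mulmxN -DQ mulKmx.
by rewrite -rowS eQ mulmxBl mulmxN !mulmxA.
Qed.

End SchurComplement.

Lemma invmx_sub_fixpoint (R : comUnitRingType) n (B H P : 'M[R]_n) :
  B \in unitmx -> (B - H) *m P = 1%:M ->
  invmx B - P = invmx B *m H *m (invmx B - P) + - (invmx B *m H *m invmx B).
Proof.
move=> unitB BHP.
have P_eq : P = invmx B + invmx B *m H *m P.
  by rewrite -mulmxA -{1}[invmx B]mulmx1 -mulmxDr -BHP mulmxBl subrK mulKmx.
by rewrite {1}P_eq mulmxBr addrAC subrr add0r opprD addNKr.
Qed.

Lemma noneigenvalue_unitmx (F : fieldType) n (g : 'M[F]_n) a :
  ~ eigenvalue g a -> a%:M - g \in unitmx.
Proof.
move/negP; rewrite negbK kermx_eq0 => free.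
by rewrite -opprB -row_free_unit /row_free mxrank_opp.
Qed.

Lemma mxblk_cmx (R : realType) N (I J : {set 'I_N}) (M : 'M[R]_N) :
  mxblk I J (cmx M) = cmx (blk I J M).
Proof. by apply/matrixP => i j; rewrite !mxE. Qed.

Lemma resolvent_mxblk_schur (R : realType) N (C : 'M[R]_N) (S S' : {set 'I_N}) z :
  [disjoint S & S'] -> S :|: S' = [set: 'I_N] ->
  ~ eigenvalue (cmx C) z -> ~ eigenvalue (cmx (blk S' S' C)) z ->
  (z%:M - cmx (blk S S C)
     - cmx (blk S S' C) *m invmx (z%:M - cmx (blk S' S' C)) *m cmx (blk S' S C))
    *m mxblk S S (invmx (z%:M - cmx C)) = 1%:M.
Proof.
move=> dS covS eigC eigD; have dS' : [disjoint S' & S] by rewrite disjoint_sym.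
have unitD : mxblk S' S' (z%:M - cmx C) \in unitmx.
  by rewrite mxblk_sub_scalar mxblk_cmx; exact: noneigenvalue_unitmx.
have := schur_complement_mxblk dS covS (mulmxV (noneigenvalue_unitmx eigC)) unitD.
rewrite !(mxblk_sub_scalar _ z (cmx C)) (mxblk_sub_scalar_disjoint z (cmx C) dS).
rewrite (mxblk_sub_scalar_disjoint z (cmx C) dS') !mxblk_cmx.
by rewrite mulmxN !mulNmx opprK.
Qed.

Lemma fine_ub_lt1 (R : realType) (x : R) (T : \bar R) :
  (x%:E <= T)%E -> (T < 1)%E -> x <= fine T < 1.
Proof.
case: T => [r| |] /=; first by rewrite lee_fin lte_fin => -> ->.
  by move=> _; rewrite ltNge leey.
by rewrite leeNy_eq.
Qed.

Unset Implicit Arguments.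
Theorem lemma4 (R : realType) (N : nat) (C : 'M[R]_N) (S S' : {set 'I_N})
    (gx gy : R -> R) :
  C^T = C ->
  (forall x : 'cV[R]_N, x != 0 -> 0 < (x^T *m C *m x) 0 0) ->
  [disjoint S & S'] -> S :|: S' = [set: 'I_N] -> S != finset.set0 -> S' != finset.set0 ->
  simple_closed_curve gx gy ->
  (forall t, 0 <= t <= 1 -> ~ (gy t = 0 /\ gx t <= 0)) ->
  (forall l : R[i], eigenvalue (cmx C) l -> winding_one gx gy l) ->
  (forall z, curve_set gx gy z ->
     [/\ ~ eigenvalue (cmx C) z,
         ~ eigenvalue (cmx (blk S S C)) z &
         ~ eigenvalue (cmx (blk S' S' C)) z]) ->
  let Binv := fun z : R[i] => invmx (z%:M - cmx (blk S S C)) in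
  let Dinv := fun z : R[i] => invmx (z%:M - cmx (blk S' S' C)) in
  let H := fun z : R[i] => cmx (blk S S' C) *m Dinv z *m cmx (blk S' S C) in
  let RS := fun z : R[i] =>
    Binv z - \matrix_(i < #|S|, j < #|S|) (invmx (z%:M - cmx C)) (enum_val i) (enum_val j) in
  let Theta := ereal_sup [set (specnorm (Binv z *m H z))%:E | z in curve_set gx gy]%classic in
  (Theta < 1)%E ->
  forall z, curve_set gx gy z ->
    specnorm (RS z) <=
      specnorm (cmx (blk S S' C)) ^+ 2 / (1 - fine Theta)
      * specnorm (Binv z) ^+ 2 * specnorm (Dinv z).
Proof.
move=> Csym _ dS covS _ _ _ _ _ noeig Binv Dinv H RS Theta Theta_lt1 z zc.
have [eigC eigB eigD] := noeig z zc.
have schur := resolvent_mxblk_schur dS covS eigC eigD.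
have eqRS := invmx_sub_fixpoint (noneigenvalue_unitmx eigB) schur.
have /andP [X_le Theta_lt1'] : specnorm (Binv z *m H z) <= fine Theta < 1.
  by apply: fine_ub_lt1 Theta_lt1; apply: ereal_sup_ubound; exists z.
apply: le_trans (specnorm_fixpoint_le eqRS X_le Theta_lt1') _.
set b := specnorm (Binv z); set c := specnorm (cmx (blk S S' C)).
set d := specnorm (Dinv z).
have c'_le_c : specnorm (cmx (blk S' S C)) <= c.
  have -> : cmx (blk S' S C) = (cmx (blk S S' C))^T.
    by apply/matrixP => i j; rewrite !mxE -[in LHS]Csym mxE.
  exact: specnorm_trmx_real.
have K_le : specnorm (Binv z *m H z *m Binv z) <= b * c * d * c * b.
  rewrite /H !mulmxA.
  apply: le_trans (specnormM _ _) _; rewrite ler_wpM2r ?specnorm_ge0 //.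
  apply: le_trans (specnormM _ _) _; apply: ler_pM; rewrite ?specnorm_ge0 //.
  apply: le_trans (specnormM _ _) _; rewrite ler_wpM2r ?specnorm_ge0 //.
  exact: specnormM.
have -> : c ^+ 2 / (1 - fine Theta) * b ^+ 2 * d = b * c * d * c * b / (1 - fine Theta).
  by ring.
by rewrite specnormN ler_wpM2r // invr_ge0 subr_ge0 ltW.
Qed.
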